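(* In the Poisson matching problem $PM(\lambda,\mu)$ (defined in the context), for any blue points $b_1,b_2\in\mathcal{B}$, if $\mathcal{P}(b_1)\cap\mathcal{P}(b_2)\neq\emptyset$ then $\mathcal{P}(b_1)=\mathcal{P}(b_2)$.
   Context: Poisson matching problem $PM(\lambda,\mu)$, $0<\lambda\le\mu$: $\mathcal{B}$ (blue points) and $\mathcal{R}$ (red points) are independent homogeneous Poisson point processes on $\mathbb{R}$ of intensities $\lambda$ and $\mu$ respectively; $\mathcal{S}=\mathcal{B}\cup\mathcal{R}$. A matching is a map $\mathcal{M}:\mathcal{S}\to\mathcal{S}\cup\{\infty\}$ with $\mathcal{M}(r)\in\mathcal{B}\cup\{\infty\}$ for red $r$, $\mathcal{M}(b)\in\mathcal{R}\cup\{\infty\}$ for blue $b$, and $\mathcal{M}(r)=b$ iff $\mathcal{M}(b)=r$. The matching segment $I_\mathcal{M}(x)$ is the open interval with endpoints $x$ and $\mathcal{M}(x)$ ($(x,\infty)$ if $x$ is unmatched). $\mathcal{M}$ is nested if for all $x,y\in\mathcal{S}$, $x\in I_\mathcal{M}(y)$ implies $\mathcal{M}(x)$ lies in the closure of $I_\mathcal{M}(y)$. For $b\in\mathcal{B}$, the set of potential matches of $b$ is $\mathcal{P}(b)=\{r\in\mathcal{R}:\text{there is a nested matching }\mathcal{M}\text{ with }\mathcal{M}(b)=r\}$. *)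

From HB Require Import structures.
From mathcomp Require Import all_boot all_order all_algebra.
From mathcomp Require Import all_classical all_reals all_analysis.
Set Implicit Arguments.
Unset Strict Implicit.
Unset Printing Implicit Defensive.
Import Order.TTheory GRing.Theory Num.Theory.
Local Open Scope classical_set_scope.
Local Open Scope ring_scope.

(* A matching is a map  M : R -> option R  where [None] stands for the point
   at infinity (x unmatched). Only its values on S = Bs `|` Rs matter. *)

Definition is_matching {R : realType} (Bs Rs : set R) (M : R -> option R) : Prop :=
  (forall r, Rs r -> forall y, M r = Some y -> Bs y) /\
  (forall b, Bs b -> forall y, M b = Some y -> Rs y) /\
  (forall r b, Rs r -> Bs b -> (M r = Some b <-> M b = Some r)).

Definition seg {R : realType} (M : R -> option R) (x : R) : set R :=
  match M x with
  | Some y => [set z | Num.min x y < z < Num.max x y]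
  | None => [set z | x < z]
  end.

(* "M(x) lies in the closure of I_M(y)", the closure being taken in
   R \cup {oo}: [min, max] for a bounded segment, [y, oo] for (y, oo). *)
Definition in_closure_seg {R : realType} (M : R -> option R) (y : R)
    (v : option R) : Prop :=
  match M y, v with
  | Some y', Some w => Num.min y y' <= w <= Num.max y y'
  | Some _, None => False
  | None, Some w => y <= w
  | None, None => True
  end.

Definition is_nested {R : realType} (Bs Rs : set R) (M : R -> option R) : Prop :=
  forall x y, (Bs `|` Rs) x -> (Bs `|` Rs) y ->
    seg M y x -> in_closure_seg M y (M x).

Definition nested_matching {R : realType} (Bs Rs : set R) (M : R -> option R) : Prop :=
  is_matching Bs Rs M /\ is_nested Bs Rs M.

Definition potential_matches {R : realType} (Bs Rs : set R) (b : R) : set R :=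
  [set r | Rs r /\ exists M, nested_matching Bs Rs M /\ M b = Some r].

Definition npoints {R : realType} (X : set R) (A : set R) : \bar R :=
  (\esum_(x in X `&` A) 1%E)%E.

Definition pois_pmf {R : realType} (m : R) (k : nat) : R :=
  expR (- m) * m ^+ k / k`!%:R.

Definition fin_borel {R : realType} (A : set R) : Prop :=
  measurable A /\ (lebesgue_measure A < +oo)%E.

Definition count_event {d} {T : measurableType d} {R : realType}
    (X : T -> set R) (A : set R) (k : nat) : set T :=
  [set w | npoints (X w) A = (k%:R)%:E].

Definition count_events {d} {T : measurableType d} {R : realType}
    (X : T -> set R) (n : nat) (A : nat -> set R) (k : nat -> nat) : set T :=
  [set w | forall i, (i < n)%N -> npoints (X w) (A i) = ((k i)%:R)%:E].

Definition poisson_process {d} {T : measurableType d} {R : realType}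
    (P : probability T R) (lam : R) (X : T -> set R) : Prop :=
  (forall A k, fin_borel A -> measurable (count_event X A k)) /\
  (forall A k, fin_borel A ->
     P (count_event X A k) = (pois_pmf (lam * fine (lebesgue_measure A)) k)%:E) /\
  (forall n (A : nat -> set R) (k : nat -> nat),
     (forall i, (i < n)%N -> fin_borel (A i)) ->
     (forall i j, (i < n)%N -> (j < n)%N -> i <> j -> A i `&` A j = set0) ->
     P (count_events X n A k) = (\prod_(i < n) P (count_event X (A i) (k i)))%E).

(* independence of two point processes (product rule on the generating
   pi-systems of their sigma-algebras) *)
Definition indep_processes {d} {T : measurableType d} {R : realType}
    (P : probability T R) (X Y : T -> set R) : Prop :=
  forall n m (A C : nat -> set R) (k l : nat -> nat),
    (forall i, (i < n)%N -> fin_borel (A i)) ->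
    (forall j, (j < m)%N -> fin_borel (C j)) ->
    P (count_events X n A k `&` count_events Y m C l) =
      (P (count_events X n A k) * P (count_events Y m C l))%E.

From HB Require Import structures.
From mathcomp Require Import all_boot all_order all_algebra.
From mathcomp Require Import all_classical all_reals all_analysis.
From mathcomp Require Import finmap ring lra zify.
Import Order.TTheory GRing.Theory Num.Theory.
Local Open Scope classical_set_scope.
Local Open Scope ring_scope.

(* A red point r is a potential match of a blue point b exactly when the open
   interval between them holds as many blue as red points.  If a nested matching
   pairs b with r, the points strictly between them are matched among themselves,
   blue to red; conversely, a balanced interval that contains points contains an
   adjacent blue-red pair, and matching it and recursing on the remaining points
   builds a nested matching.  Counting from a point K on the left, balance reads
   h(r) = h(b) + 1 for the height h(x) = #blue - #red in (K, x); hence two blue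
   points sharing one potential match share all of them.
   Almost surely, two independent Poisson processes are locally finite (their
   counts are Poisson, hence finite) and disjoint (covering [-n, n] by 2n(m+1)
   cells of length 1/(m+1), the union bound gives probability at most
   2n lam mu / (m+1) of a common point), which is all the deterministic argument
   needs. *)

(* Junk value: [fset_set A] is empty, hence [fsize A = 0], when [A] is infinite. *)
Definition fsize {T : choiceType} (A : set T) : nat := #|` fset_set A|.

Section FiniteCount.
Context {T : choiceType}.
Implicit Types A B : set T.

Lemma fsize_le A B : finite_set B -> A `<=` B -> (fsize A <= fsize B)%N.
Proof.
move=> finB AB; apply: fsubset_leq_card.
by rewrite -fset_set_sub //; exact: sub_finite_set finB.
Qed.

Lemma fsize_setD1 {A x} : finite_set A -> A x -> fsize A = (fsize (A `\ x)).+1.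
Proof.
by move=> finA Ax; rewrite /fsize fset_setD1 // (cardfsD1 x) in_fset_set ?mem_set.
Qed.

Lemma fsize_eq0 {A} : finite_set A -> fsize A = 0%N -> A = set0.
Proof. by move=> finA /cardfs0_eq; exact: fset_set_set0. Qed.

Lemma fsize_gt0 {A} : (0 < fsize A)%N -> A !=set0.
Proof.
by move=> A_gt0; apply/set0P; apply: contraTneq A_gt0 => ->; rewrite /fsize fset_set0.
Qed.

Lemma fsize_setU A B : finite_set A -> finite_set B -> A `&` B = set0 ->
  fsize (A `|` B) = (fsize A + fsize B)%N.
Proof.
move=> finA finB AB0; rewrite /fsize fset_setU // -cardfsUI.
by rewrite -fset_setI // AB0 fset_set0 cardfs0 addn0.
Qed.

Lemma fsize_setI1 A x : fsize (A `&` [set x]) = (x \in A).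
Proof.
by rewrite setI1; case: (x \in A); rewrite /fsize ?fset_set1 ?cardfs1 ?fset_set0 ?cardfs0.
Qed.

Lemma fsize_image (U : choiceType) (f : T -> U) A : finite_set A ->
  {in A &, injective f} -> fsize (f @` A) = fsize A.
Proof.
move=> finA injf; rewrite /fsize fset_set_image // card_in_imfset //.
by move=> x y; rewrite !in_fset_set //; exact: injf.
Qed.

End FiniteCount.

Section Intervals.
Context {R : realType}.
Implicit Types a c x y z : R.

Definition between a c : set R := [set z | Num.min a c < z < Num.max a c].
Definition segment a c : set R := [set z | Num.min a c <= z <= Num.max a c].

Lemma betweenC a c : between a c = between c a.
Proof. by rewrite /between minC maxC. Qed.

Lemma betweenE a c : a <= c -> between a c = [set z | a < z < c].
Proof. by move=> ac; rewrite /between (min_l ac) (max_r ac). Qed.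

Lemma between_segment {a c z} : between a c z -> segment a c z.
Proof. by move=> /andP[/ltW az /ltW zc]; apply/andP. Qed.

Lemma segment_endl a c : segment a c a.
Proof. by rewrite /segment /= ge_min le_max lexx. Qed.

Lemma segment_endr a c : segment a c c.
Proof. by rewrite /segment /= ge_min le_max lexx !orbT. Qed.

Lemma between_endl a c : ~ between a c a.
Proof.
by rewrite /between /= gt_min lt_max ltxx /= => /andP[/lt_trans ca /ca]; rewrite ltxx.
Qed.

Lemma between_endr a c : ~ between a c c.
Proof. by rewrite betweenC; exact: between_endl. Qed.

Lemma subset_between {a c x y} : segment a c x -> segment a c y ->
  between x y `<=` between a c.
Proof.
move=> /andP[ax xc] /andP[ay yc] z /andP[xyz zxy]; apply/andP; split.
  by apply: le_lt_trans xyz; rewrite le_min ax ay.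
by apply: (lt_le_trans zxy); rewrite ge_max xc yc.
Qed.

Lemma segment_between a c z : segment a c z -> z <> a -> z <> c -> between a c z.
Proof.
rewrite /segment /between /=; have [_|_] := leP a c => /andP[az zc] /eqP za /eqP zc'.
all: by rewrite !lt_neqAle az zc eq_sym za zc'.
Qed.

Lemma betweenP a c z : between a c z <-> (a < z < c) \/ (c < z < a).
Proof.
rewrite /between /=; have [ac|ca] := leP a c.
  by split; [left|case=> /andP[? ?] //; lra].
by split; [right|case=> /andP[? ?] //; lra].
Qed.

Lemma segment_adjacent x y p q : between x y p ->
  ~ between p q x -> ~ between p q y -> segment x y q.
Proof.
rewrite /segment /= !betweenP => xyp pqx pqy.
have [xy|yx] := leP x y.
all: apply/andP; split; rewrite leNgt; apply/negP => q_out.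
all: case: xyp => /andP[? ?]; first [lra | solve [(apply: pqx + apply: pqy);
  (left + right); apply/andP; split; lra]].
Qed.

Lemma ray_adjacent x p q : x < p -> ~ between p q x -> x <= q.
Proof.
rewrite betweenP => xp pqx; rewrite leNgt; apply/negP => qx.
by apply: pqx; right; apply/andP.
Qed.

End Intervals.

Section NestedMatchings.
Context {R : realType}.
Implicit Types (Bs Rs : set R) (M : R -> option R) (b r p q u v w x y z : R).

Lemma matching_sym {Bs Rs M x y} : is_matching Bs Rs M -> (Bs `|` Rs) x ->
  M x = Some y -> M y = Some x.
Proof.
move=> [MR [MB Msym]] [Bx|Rx] Mxy.
  exact: (proj2 (Msym y x (MB x Bx y Mxy) Bx) Mxy).
exact: (proj1 (Msym x y Rx (MR x Rx y Mxy)) Mxy).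
Qed.

Lemma nested_matched_between {Bs Rs M b r} : nested_matching Bs Rs M ->
  Bs b -> M b = Some r -> forall z, (Bs `|` Rs) z -> between b r z ->
  exists2 w, M z = Some w & between b r w.
Proof.
move=> [Mmatch Mnest] Bb Mbr z Sz brz.
have := Mnest z b Sz (or_introl Bb); rewrite /seg /in_closure_seg Mbr => /(_ brz).
case Mzw: (M z) => [w|] // brw; exists w => //.
apply: segment_between => // [wb|wr]; subst w.
  have := matching_sym Mmatch Sz Mzw; rewrite Mbr => -[rz].
  by subst z; exact: between_endr brz.
have := matching_sym Mmatch Sz Mzw.
rewrite (matching_sym Mmatch (or_introl Bb) Mbr) => -[bz].
by subst z; exact: between_endl brz.
Qed.

Lemma nested_matching_balanced {Bs Rs M b r} : nested_matching Bs Rs M ->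
  Bs b -> M b = Some r -> finite_set (Bs `&` between b r) ->
  fsize (Bs `&` between b r) = fsize (Rs `&` between b r).
Proof.
move=> Mnm Bb Mbr finB; have [[MR [MB _]] _] := Mnm; have Mmatch := Mnm.1.
have partner := nested_matched_between Mnm Bb Mbr.
pose f z := odflt z (M z).
have -> : Rs `&` between b r = f @` (Bs `&` between b r).
  apply/seteqP; split => [z [Rz brz]|_ [z [Bz brz] <-]].
    have [w Mzw brw] := partner z (or_intror Rz) brz.
    exists w; first by split => //; exact: MR z Rz w Mzw.
    by rewrite /f (matching_sym Mmatch (or_intror Rz) Mzw).
  have [w Mzw brw] := partner z (or_introl Bz) brz.
  by rewrite /f Mzw; split => //; exact: MB z Bz w Mzw.
rewrite fsize_image // => z1 z2 /set_mem[Bz1 brz1] /set_mem[Bz2 brz2].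
have [w1 Mz1 _] := partner z1 (or_introl Bz1) brz1.
have [w2 Mz2 _] := partner z2 (or_introl Bz2) brz2.
rewrite /f Mz1 Mz2 /= => w12; subst w2.
have := matching_sym Mmatch (or_introl Bz1) Mz1.
by rewrite (matching_sym Mmatch (or_introl Bz2) Mz2) => -[].
Qed.

Lemma exists_adjacent_pair {Bs Rs a c u v} :
  finite_set ((Bs `|` Rs) `&` between a c) -> between a c u -> between a c v ->
  Bs u -> Rs v -> exists p q, [/\ Bs p, Rs q, between a c p, between a c q &
    (Bs `|` Rs) `&` between p q = set0].
Proof.
move=> fin_ac; have [n] := ubnP (fsize ((Bs `|` Rs) `&` between u v)).
elim: n u v => // n IH u v + acu acv Bu Rv.
have uv_ac := subset_between (between_segment acu) (between_segment acv).
have [[z [Sz uvz]]|empty] := pselect ((Bs `|` Rs) `&` between u v !=set0); last first.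
  move=> _; exists u, v; split => //; apply/seteqP; split => // z Sz.
  by apply: empty; exists z.
rewrite ltnS => count_uv.
have fin_uv : finite_set ((Bs `|` Rs) `&` between u v).
  by apply: (sub_finite_set _ fin_ac) => t [St /uv_ac].
have shrink x y : segment u v x -> segment u v y -> ~ between x y z ->
    (fsize ((Bs `|` Rs) `&` between x y) < n)%N.
  move=> uvx uvy xyz; apply: leq_trans count_uv.
  rewrite (fsize_setD1 fin_uv (conj Sz uvz)) ltnS.
  apply: fsize_le; first exact: finite_setD.
  move=> t [St xyt]; split; first by split => //; exact: subset_between uvx uvy t xyt.
  by move=> tz; apply: xyz; rewrite -tz.
case: Sz => [Bz|Rz].
  apply: (IH z v) => //; last exact: uv_ac.
  exact: shrink (between_segment uvz) (segment_endr u v) (@between_endl _ z v).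
apply: (IH u z) => //; last exact: uv_ac.
exact: shrink (segment_endl u v) (between_segment uvz) (@between_endr _ u z).
Qed.

Definition add_pair M p q : R -> option R :=
  fun x => if x == p then Some q else if x == q then Some p else M x.

Section AddPair.
Variables (Bs Rs : set R) (M : R -> option R) (p q : R).
Hypotheses (BR0 : Bs `&` Rs = set0) (Bp : Bs p) (Rq : Rs q).
Hypothesis Mmatch : is_matching (Bs `\ p) (Rs `\ q) M.

Let N := add_pair M p q.

Let not_blue_red {x} : Bs x -> ~ Rs x.
Proof. exact: (proj1 (disjoints_subset Bs Rs) BR0 x). Qed.

Let Np : N p = Some q.
Proof. by rewrite /N /add_pair eqxx. Qed.

Let Nq : N q = Some p.
Proof.
rewrite /N /add_pair eqxx; case: eqP => // qp.
by have := not_blue_red Bp; rewrite -qp.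
Qed.

Let N_other x : x != p -> x != q -> N x = M x.
Proof. by rewrite /N /add_pair => /negbTE-> /negbTE->. Qed.

Let rest_mem {y} : (Bs `\ p `|` Rs `\ q) y -> [/\ (Bs `|` Rs) y, y != p & y != q].
Proof.
case=> [[By yp]|[Ry yq]]; split; try by [left|right|apply/eqP].
  by apply: contraPneq Rq => <-; exact: not_blue_red By.
by apply: contraPneq Ry => ->; exact: not_blue_red Bp.
Qed.

Let mem_rest {x} : (Bs `|` Rs) x -> x != p -> x != q -> (Bs `\ p `|` Rs `\ q) x.
Proof. by case=> [Bx|Rx] /eqP xp /eqP xq; [left|right]. Qed.

Let M_other {x y} : (Bs `\ p `|` Rs `\ q) x -> M x = Some y ->
  (Bs `\ p `|` Rs `\ q) y.
Proof.
case: Mmatch => [MR [MB _]] [Bx|Rx] Mxy; first by right; exact: MB x Bx _ Mxy.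
by left; exact: MR x Rx _ Mxy.
Qed.

Let N_sym x y : (Bs `|` Rs) x -> N x = Some y -> N y = Some x.
Proof.
have [->|xp] := eqVneq x p; first by rewrite Np => _ [<-].
have [->|xq] := eqVneq x q; first by rewrite Nq => _ [<-].
move=> /mem_rest /(_ xp xq) S'x.
rewrite N_other // => Mxy; have [_ yp yq] := rest_mem (M_other S'x Mxy).
by rewrite N_other //; exact: matching_sym Mmatch S'x Mxy.
Qed.

Lemma add_pair_matching : is_matching Bs Rs N.
Proof.
case: Mmatch => [MR [MB _]].
split; [|split] => [x Rx y|x Bx y|r b Rr Bb]; last by split; apply: N_sym; [right|left].
- have [->|xq] := eqVneq x q; first by rewrite Nq => -[<-].
  have xp : x != p by apply: contraPneq Rx => ->; exact: not_blue_red Bp.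
  by rewrite N_other // => /(MR x (conj Rx (elimN eqP xq))) [].
- have [->|xp] := eqVneq x p; first by rewrite Np => -[<-].
  have xq : x != q by apply: contraPneq Rq => <-; exact: not_blue_red Bx.
  by rewrite N_other // => /(MB x (conj Bx (elimN eqP xp))) [].
Qed.

Lemma add_pair_nested : (Bs `|` Rs) `&` between p q = set0 ->
  is_nested (Bs `\ p) (Rs `\ q) M -> is_nested Bs Rs N.
Proof.
move=> /disjoints_subset pq_out Mnest x y Sx Sy.
have [->|yp] := eqVneq y p; first by rewrite /seg Np => /(pq_out x Sx).
have [->|yq] := eqVneq y q.
  by rewrite /seg Nq -/(between q p) betweenC => /(pq_out x Sx).
have S'y := mem_rest Sy yp yq.
have -> : seg N y = seg M y by rewrite /seg N_other.
have -> : in_closure_seg N y = in_closure_seg M y by rewrite /in_closure_seg N_other.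
have to_adjacent u u' : Bs `|` Rs `<=` ~` between u u' -> seg M y u ->
    in_closure_seg M y (Some u').
  rewrite /seg /in_closure_seg => uu'_out; case My: (M y) => [y'|] yu.
    have [Sy' _ _] := rest_mem (M_other S'y My).
    exact: segment_adjacent yu (uu'_out y Sy) (uu'_out y' Sy').
  exact: ray_adjacent yu (uu'_out y Sy).
have [->|xp] := eqVneq x p; first by rewrite Np; exact: to_adjacent.
have [->|xq] := eqVneq x q; first by rewrite Nq; apply: to_adjacent; rewrite betweenC.
by rewrite N_other //; apply: Mnest => //; exact: mem_rest.
Qed.

End AddPair.

Lemma nested_matching_add_pair Bs Rs M p q : Bs `&` Rs = set0 -> Bs p -> Rs q ->
  (Bs `|` Rs) `&` between p q = set0 ->
  nested_matching (Bs `\ p) (Rs `\ q) M -> nested_matching Bs Rs (add_pair M p q).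
Proof.
by move=> BR0 Bp Rq pq0 [Mmatch Mnest]; split;
  [exact: add_pair_matching|exact: add_pair_nested].
Qed.

Lemma nested_matching_of_balanced {Bs Rs b r} : Bs `&` Rs = set0 -> Bs b -> Rs r ->
  finite_set (Bs `&` between b r) -> finite_set (Rs `&` between b r) ->
  fsize (Bs `&` between b r) = fsize (Rs `&` between b r) ->
  exists2 M, nested_matching Bs Rs M & M b = Some r.
Proof.
move=> + + + + + bal; have [n] := ubnP (fsize (Bs `&` between b r)).
elim: n Bs Rs bal => // n IH Bs Rs bal + BR0 Bb Rr finB finR; rewrite ltnS => Bn.
have [B0|Bpos] := posnP (fsize (Bs `&` between b r)).
  exists (add_pair (fun=> None) b r); last by rewrite /add_pair eqxx.
  apply: nested_matching_add_pair => //.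
  by rewrite setIUl (fsize_eq0 finB B0) (fsize_eq0 finR); rewrite -?bal ?setU0.
have [u [Bu bru]] := fsize_gt0 Bpos.
have [v [Rv brv]] : Rs `&` between b r !=set0 by apply: fsize_gt0; rewrite -bal.
have finBR : finite_set ((Bs `|` Rs) `&` between b r) by rewrite setIUl finite_setU.
have [p [q [Bp Rq brp brq pq0]]] := exists_adjacent_pair finBR bru brv Bu Rv.
have I_setD1 A x : (A `\ x) `&` between b r = (A `&` between b r) `\ x.
  by rewrite setIDAC setIDA.
have bp : b != p by apply: contraPneq brp => <-; exact: between_endl.
have bq : b != q by apply: contraPneq brq => <-; exact: between_endl.
have rq : r != q by apply: contraPneq brq => <-; exact: between_endr.
have [M' M'nested M'b] :
    exists2 M', nested_matching (Bs `\ p) (Rs `\ q) M' & M' b = Some r.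
  apply: IH; rewrite ?I_setD1.
  - apply/succn_inj.
    by rewrite -(fsize_setD1 finB (conj Bp brp)) -(fsize_setD1 finR (conj Rq brq)).
  - by rewrite -ltnS -(fsize_setD1 finB (conj Bp brp)).
  - by apply: subsetI_eq0 BR0 => x [].
  - by split => //; apply/eqP.
  - by split => //; apply/eqP.
  - exact: finite_setD.
  - exact: finite_setD.
exists (add_pair M' p q); first exact: nested_matching_add_pair.
by rewrite /add_pair (negbTE bp) (negbTE bq).
Qed.

Definition locally_finite (X : set R) := forall a c, finite_set (X `&` between a c).

Lemma potential_matchesP Bs Rs b r : Bs `&` Rs = set0 ->
  locally_finite Bs -> locally_finite Rs -> Bs b ->
  potential_matches Bs Rs b r <->
  Rs r /\ fsize (Bs `&` between b r) = fsize (Rs `&` between b r).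
Proof.
move=> BR0 finB finR Bb; split => [[Rr [M [Mnested Mbr]]]|[Rr bal]].
  by split => //; exact: nested_matching_balanced Mnested Bb Mbr (finB b r).
have [M Mnested Mbr] := nested_matching_of_balanced BR0 Bb Rr (finB b r) (finR b r) bal.
by split => //; exists M.
Qed.

Lemma fsize_between_split {X : set R} {K u v} : K < u -> u < v ->
  finite_set (X `&` between K v) ->
  fsize (X `&` between K v) =
    (fsize (X `&` between K u) + (u \in X) + fsize (X `&` between u v))%N.
Proof.
move=> Ku uv finKv; have Kv := lt_trans Ku uv.
rewrite -fsize_setI1 !betweenE ?ltW // in finKv *.
have -> : X `&` [set z | K < z < v] =
    X `&` [set z | K < z < u] `|` X `&` [set u] `|` X `&` [set z | u < z < v].
  apply/seteqP; split => z /=.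
    case=> Xz /andP[Kz zv]; have [zu|uz|zu] := ltgtP z u.
    - by left; left; split => //; apply/andP.
    - by right; split => //; apply/andP.
    - by left; right; split.
  case=> [[[Xz /andP[? ?]]|[Xz ?]]|[Xz /andP[? ?]]];
    by split => //; apply/andP; split; lra.
have finI A : A `<=` X `&` [set z | K < z < v] -> finite_set A.
  by move=> AX; exact: sub_finite_set AX finKv.
rewrite fsize_setU ?fsize_setU //.
- by apply: finI => z [Xz /andP[Kz zu]]; split => //; apply/andP; split; lra.
- exact: sub_finite_set (@subIsetr _ X _) (finite_set1 u).
- by apply/seteqP; split => // z /= [[_ /andP[_ zu]] [_ uz]]; lra.
- by apply: finI => z /= [[Xz /andP[Kz zu]]|[Xz zu]]; split => //; apply/andP; split; lra.
- by apply: finI => z [Xz /andP[uz zv]]; split => //; apply/andP; split; lra.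
- by apply/seteqP; split => // z /= [[[_ /andP[_ zu]]|[_ zu]] [_ /andP[uz _]]]; lra.
Qed.

Definition height Bs Rs K x : int :=
  (fsize (Bs `&` between K x))%:Z - (fsize (Rs `&` between K x))%:Z.

Lemma balanced_height {Bs Rs K b r} : Bs `&` Rs = set0 ->
  locally_finite Bs -> locally_finite Rs -> Bs b -> Rs r -> K < b -> K < r ->
  fsize (Bs `&` between b r) = fsize (Rs `&` between b r) <->
  height Bs Rs K r = height Bs Rs K b + 1.
Proof.
move=> BR0 finB finR Bb Rr Kb Kr.
have /disjoints_subset not_red := BR0.
have bB : b \in Bs by rewrite mem_set.
have rR : r \in Rs by rewrite mem_set.
have bR : b \in Rs = false by apply/memNset/not_red.
have rB : r \in Bs = false by apply: memNset => /not_red.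
rewrite /height; have [br|rb|br] := ltgtP b r.
- rewrite (fsize_between_split Kb br (finB K r)) (fsize_between_split Kb br (finR K r)).
  by rewrite bB bR; lia.
- rewrite (fsize_between_split Kr rb (finB K b)) (fsize_between_split Kr rb (finR K b)).
  by rewrite rB rR betweenC; lia.
- by rewrite br in Bb; case: (not_red r).
Qed.

Lemma potential_matches_height Bs Rs K b r : Bs `&` Rs = set0 ->
  locally_finite Bs -> locally_finite Rs -> Bs b -> K < b -> K < r ->
  potential_matches Bs Rs b r <-> Rs r /\ height Bs Rs K r = height Bs Rs K b + 1.
Proof.
move=> BR0 finB finR Bb Kb Kr; rewrite potential_matchesP //.
by split=> -[Rr bal]; split => //; apply/(balanced_height BR0 finB finR Bb Rr Kb Kr).
Qed.

Theorem potential_matches_eq Bs Rs b1 b2 : Bs `&` Rs = set0 ->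
  locally_finite Bs -> locally_finite Rs -> Bs b1 -> Bs b2 ->
  potential_matches Bs Rs b1 `&` potential_matches Bs Rs b2 !=set0 ->
  potential_matches Bs Rs b1 = potential_matches Bs Rs b2.
Proof.
move=> BR0 finB finR Bb1 Bb2 [r [b1r b2r]].
suff sub b b' : Bs b -> Bs b' -> potential_matches Bs Rs b r ->
    potential_matches Bs Rs b' r ->
    potential_matches Bs Rs b `<=` potential_matches Bs Rs b'.
  by apply/seteqP; split; apply: sub.
move=> Bb Bb' br b'r r' br'.
have [K [Kb Kb' Kr Kr']] : exists K, [/\ K < b, K < b', K < r & K < r'].
  exists (Num.min (Num.min b b') (Num.min r r') - 1).
  by split; rewrite ltrBlDr; apply: ltr_pwDr; rewrite ?ge_min ?lexx ?orbT.
move: br b'r br'; rewrite !(potential_matches_height _ _ K _ _ BR0 finB finR) //.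
by move=> [_ hr] [_ hr'] [Rr' hr2]; split; rewrite // hr2 -hr hr'.
Qed.

End NestedMatchings.

Lemma locally_finite_itv {R : realType} (X : set R) :
  (forall n : nat, finite_set (X `&` `]- n%:R, n%:R[)) -> locally_finite X.
Proof.
move=> finX a c; pose n := (Num.trunc (`|a| + `|c|)).+1.
apply: sub_finite_set (finX n) => z [Xz acz]; split => //.
have := truncnS_gt (`|a| + `|c|); rewrite -/n => n_gt.
have : - `|a| <= a <= `|a| by rewrite -ler_norml.
have : - `|c| <= c <= `|c| by rewrite -ler_norml.
move: acz; rewrite betweenP /= in_itv /=.
by case=> /andP[? ?] /andP[? ?] /andP[? ?]; apply/andP; split; lra.
Qed.

Section PointCounts.
Context {R : realType}.
Local Open Scope ereal_scope.

Lemma pois_pmf_series (m : R) : (0 <= m)%R -> \sum_(0 <= k <oo) (pois_pmf m k)%:E = 1.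
Proof.
move=> m0.
rewrite [RHS](_ : _ = (expR (- m))%:E * (expR m)%:E); last first.
  by rewrite -EFinM expRN mulVf ?gt_eqF ?expR_gt0.
under eq_eseriesr do rewrite /pois_pmf -mulrA EFinM.
rewrite nneseriesZl/=; last by move=> n _; rewrite lee_fin divr_ge0// exprn_ge0.
congr *%E; rewrite expRE -EFin_lim; last first.
  rewrite /pseries/=; under eq_fun do rewrite mulrC.
  exact: is_cvg_series_exp_coeff.
apply/congr_lim/funext => n/=; rewrite /pseries/= /series/= -sumEFin//.
by under eq_bigr do rewrite mulrC.
Qed.

Lemma npoints_infinite (X A : set R) : infinite_set (X `&` A) -> npoints X A = +oo.
Proof.
move=> infXA; rewrite -(@infinite_card_dirac _ R R _ infXA).
by apply: eq_esum => x XAx; rewrite diracE mem_set.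
Qed.

Lemma npoints_finite (X A : set R) :
  finite_set (X `&` A) -> npoints X A = (fsize (X `&` A))%:R%:E.
Proof. exact: finite_card_sum. Qed.

Lemma finite_of_npoints (X A : set R) k :
  npoints X A = k%:R%:E -> finite_set (X `&` A).
Proof. by apply: contraPP => /npoints_infinite ->. Qed.

Lemma npoints_neq0 (X A : set R) x : (X `&` A) x -> npoints X A <> 0%:R%:E.
Proof.
move=> XAx; have [finXA|/npoints_infinite->//] := pselect (finite_set (X `&` A)).
rewrite npoints_finite // (fsize_setD1 finXA XAx) => /(congr1 fine) /= /eqP.
by rewrite eqr_nat.
Qed.

Context {d : measure_display} {T : measurableType d}.

Lemma count_event_trivIset (X : T -> set R) A : trivIset setT (count_event X A).
Proof.
move=> i j _ _ [w []]; rewrite /count_event /= => -> /(congr1 fine) /= /eqP.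
by rewrite eqr_nat => /eqP.
Qed.

Lemma count_events1 (X : T -> set R) A k :
  count_events X 1 (fun=> A) (fun=> k) = count_event X A k.
Proof. by apply/seteqP; split => w /=; [move/(_ 0%N erefl)|move=> ? []]. Qed.

End PointCounts.

Section PoissonProcesses.
Context {d : measure_display} {T : measurableType d} {R : realType}.
Context {P : probability T R}.
Local Open Scope ereal_scope.

Lemma poisson_finite {lam X A} : poisson_process P lam X -> (0 <= lam)%R ->
  fin_borel A -> {ae P, forall w, finite_set (X w `&` A)}.
Proof.
move=> [mX [pX _]] lam0 finA.
have mU : measurable (\bigcup_k count_event X A k).
  by apply: bigcupT_measurable => k; exact: mX.
exists (~` \bigcup_k count_event X A k); split.
- exact: measurableC.
- rewrite probability_setC // measure_semi_bigcup //; last 2 first.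
  + by move=> k; exact: mX.
  + exact: count_event_trivIset.
  rewrite (eq_eseriesr (fun k _ => pX A k finA)) pois_pmf_series ?subee //.
  by rewrite mulr_ge0 // fine_ge0 // measure_ge0.
- by move=> w /= Xw_inf [k _ /finite_of_npoints]; exact: Xw_inf.
Qed.

Lemma poisson_locally_finite {lam X} : poisson_process P lam X -> (0 <= lam)%R ->
  {ae P, forall w, locally_finite (X w)}.
Proof.
move=> PX lam0; have fin_itv (n : nat) : fin_borel (`](- n%:R)%R, n%:R[ : set R).
  split; first exact: measurable_itv.
  by rewrite lebesgue_measure_itv /=; case: ifP => _; rewrite ?ltry.
have := ae_foralln (fun n => poisson_finite PX lam0 (fin_itv n)).
by apply: filterS => w; exact: locally_finite_itv.
Qed.

End PoissonProcesses.

Lemma le0_harmonic_bound {R : realType} (x C : R) :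
  (forall m : nat, x <= C / m.+1%:R) -> x <= 0.
Proof.
move=> xC; rewrite leNgt; apply/negP => x_gt0.
have := xC (Num.trunc (C / x)); rewrite ler_pdivlMr // mulrC -ler_pdivlMr //.
by rewrite leNgt truncnS_gt.
Qed.

Section IndependentPoissonProcesses.
Context {d : measure_display} {T : measurableType d} {R : realType}.
Context {P : probability T R} {lam mu : R} {Blue Red : T -> set R}.
Hypotheses (PB : poisson_process P lam Blue) (PR : poisson_process P mu Red).
Hypothesis indep : indep_processes P Blue Red.
Hypotheses (lam0 : 0 <= lam) (mu0 : 0 <= mu).

Definition both_hit (A : set R) : set T :=
  ~` count_event Blue A 0 `&` ~` count_event Red A 0.

Lemma both_hit_measurable A : fin_borel A -> measurable (both_hit A).
Proof.
by case: PB PR => [mB _] [mR _] finA; apply: measurableI; apply: measurableC;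
  [exact: mB|exact: mR].
Qed.

Lemma both_hit_le A : fin_borel A ->
  (P (both_hit A) <=
    (lam * fine (lebesgue_measure A) * (mu * fine (lebesgue_measure A)))%:E)%E.
Proof.
case: PB PR => [mB [pB _]] [mR [pR _]] finA.
set t := fine (lebesgue_measure A).
have t0 : 0 <= t by rewrite fine_ge0 // measure_ge0.
have [mB0 mR0] := (mB A 0%N finA, mR A 0%N finA).
(* [measureUfinl] speaks of the [measure] coercion of [P], [poisson_process] of
   the [probability] one; [-[LHS]/(P _)] converts between them. *)
have missB : (P : measure T R) (count_event Blue A 0) = (expR (- (lam * t)))%:E.
  by rewrite -[LHS]/(P _) pB // /pois_pmf expr0 mulr1 divr1.
have missR : (P : measure T R) (count_event Red A 0) = (expR (- (mu * t)))%:E.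
  by rewrite -[LHS]/(P _) pR // /pois_pmf expr0 mulr1 divr1.
have missBR : (P : measure T R) (count_event Blue A 0 `&` count_event Red A 0) =
    (expR (- (lam * t)) * expR (- (mu * t)))%:E.
  rewrite -[LHS]/(P _) EFinM -missB -missR.
  have := indep 1%N 1%N (fun=> A) (fun=> A) (fun=> 0%N) (fun=> 0%N)
    (fun _ _ => finA) (fun _ _ => finA).
  by rewrite !count_events1.
rewrite /both_hit -setCU probability_setC; last exact: measurableU.
rewrite measureUfinl // ?ltey_eq ?fin_num_measure // missB missR missBR.
rewrite -EFinD lee_fin.
set x := expR (- (lam * t)); set y := expR (- (mu * t)).
have x1 : x <= 1 by rewrite /x expR_le1 oppr_le0 mulr_ge0.
have y1 : y <= 1 by rewrite /y expR_le1 oppr_le0 mulr_ge0.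
have x2 : 1 - lam * t <= x by have := expR_ge1Dx (- (lam * t)); rewrite /x; lra.
have y2 : 1 - mu * t <= y by have := expR_ge1Dx (- (mu * t)); rewrite /y; lra.
have -> : 1 - (x + y - x * y) = (1 - x) * (1 - y) by ring.
by apply: ler_pM; lra.
Qed.

Definition grid_cell (n m j : nat) : set R :=
  `[- n%:R + j%:R / m.+1%:R, - n%:R + j.+1%:R / m.+1%:R].

Lemma grid_cell_fin_borel n m j : fin_borel (grid_cell n m j).
Proof.
split; first exact: measurable_itv.
by rewrite lebesgue_measure_itv; case: ifP => _; rewrite ?ltry.
Qed.

Lemma grid_cell_length n m j : fine (lebesgue_measure (grid_cell n m j)) = m.+1%:R^-1.
Proof.
have cell_lt : - n%:R + j%:R / m.+1%:R < - n%:R + j.+1%:R / m.+1%:R :> R.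
  by rewrite ltrD2l ltr_pM2r ?invr_gt0 ?ltr0Sn // ltr_nat.
rewrite lebesgue_measure_itv /= lte_fin cell_lt /= -[j.+1]addn1 natrD.
by field; rewrite addrC natr1 pnatr_eq0.
Qed.

Definition grid_hit (n m : nat) : set T :=
  \big[setU/set0]_(j < 2 * n * m.+1) both_hit (grid_cell n m j).

Lemma grid_hit_measurable n m : measurable (grid_hit n m).
Proof.
by apply: bigsetU_measurable => j _; exact/both_hit_measurable/grid_cell_fin_borel.
Qed.

Lemma grid_hit_le n m : (P (grid_hit n m) <= (2 * n%:R * lam * mu / m.+1%:R)%:E)%E.
Proof.
have cells_meas j : `I_(2 * n * m.+1) j -> measurable (both_hit (grid_cell n m j)).
  by move=> _; exact/both_hit_measurable/grid_cell_fin_borel.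
have := content_subadditive P cells_meas (grid_hit_measurable n m) (@subset_refl _ _).
move/le_trans; apply.
set c := lam * m.+1%:R^-1 * (mu * m.+1%:R^-1).
apply: (@le_trans _ _ (\sum_(j < 2 * n * m.+1) c%:E)%R).
  apply: lee_sum => j _; rewrite /c -(grid_cell_length n m j).
  exact: both_hit_le (grid_cell_fin_borel n m j).
rewrite sumEFin sumr_const card_ord lee_fin /c -[X in X <= _]mulr_natl !natrM.
by rewrite le_eqVlt; apply/orP; left; apply/eqP; field; rewrite addrC natr1 pnatr_eq0.
Qed.

Lemma grid_hit_cover n m w x : Blue w x -> Red w x -> - n%:R < x < n%:R ->
  grid_hit n m w.
Proof.
move=> Bx Rx /andP[nx xn]; have k_gt0 : 0 < m.+1%:R :> R by [].
have y_ge0 : 0 <= (x + n%:R) * m.+1%:R by rewrite mulr_ge0 // ?ltW //; lra.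
have /andP[jy yj] := truncn_itv y_ge0; set j := Num.trunc _ in jy yj.
have j_lt : (j < 2 * n * m.+1)%N.
  rewrite truncn_lt_nat // !natrM ltr_pM2r //; lra.
have cell_x : grid_cell n m j x.
  rewrite /grid_cell /= in_itv /=; apply/andP; split.
    by rewrite -lerBrDl opprK addrC ler_pdivrMr // addrC.
  by rewrite -lerBlDl opprK addrC ler_pdivlMr // addrC ltW.
apply: (@bigsetU_sup _ _ _ (both_hit \o grid_cell n m) j_lt).
by split; exact: npoints_neq0 (conj _ cell_x).
Qed.

Lemma no_common_point_below n : {ae P, forall w, forall x,
  Blue w x -> Red w x -> - n%:R < x < n%:R -> False}.
Proof.
pose D := \bigcap_m grid_hit n m.
have mD : measurable D by apply: bigcapT_measurable => m; exact: grid_hit_measurable.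
exists D; split => //; last first.
  move=> w /= Nw m _; apply: contrapT => Nhit; apply: Nw => x Bx Rx nx.
  by apply: Nhit; exact: grid_hit_cover Bx Rx nx.
have PD_le m : (P D <= (2 * n%:R * lam * mu / m.+1%:R)%:E)%E.
  apply: le_trans (grid_hit_le n m); apply: le_measure.
  - exact: mem_set mD.
  - exact/mem_set/grid_hit_measurable.
  - by move=> w /(_ m I).
have finD : P D \is a fin_num by rewrite fin_num_measure.
apply/eqP; rewrite eq_le measure_ge0 andbT -(fineK finD) lee_fin.
by apply: le0_harmonic_bound => m; rewrite -lee_fin fineK.
Qed.

Lemma indep_poisson_disjoint : {ae P, forall w, Blue w `&` Red w = set0}.
Proof.
apply: filterS (ae_foralln no_common_point_below) => w no_common.
apply/seteqP; split => // x [Bx Rx]; apply: (no_common (Num.trunc `|x|).+1 x Bx Rx).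
have := truncnS_gt `|x|; have : - `|x| <= x <= `|x| by rewrite -ler_norml.
by move=> /andP[? ?] ?; apply/andP; split; lra.
Qed.

End IndependentPoissonProcesses.

Theorem lemma4p3 (d : measure_display) (T : measurableType d) (R : realType)
    (P : probability T R) (lam mu : R) (Blue Red : T -> set R) :
  0 < lam -> lam <= mu ->
  poisson_process P lam Blue -> poisson_process P mu Red ->
  indep_processes P Blue Red ->
  {ae P, forall w, forall b1 b2 : R, Blue w b1 -> Blue w b2 ->
     potential_matches (Blue w) (Red w) b1 `&`
       potential_matches (Blue w) (Red w) b2 !=set0 ->
     potential_matches (Blue w) (Red w) b1 =
       potential_matches (Blue w) (Red w) b2}.
Proof.
move=> lam_gt0 lam_le_mu PB PR indep.
have lam_ge0 := ltW lam_gt0; have mu_ge0 := le_trans lam_ge0 lam_le_mu.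
apply: filterS3 (indep_poisson_disjoint PB PR indep lam_ge0 mu_ge0)
  (poisson_locally_finite PB lam_ge0) (poisson_locally_finite PR mu_ge0).
by move=> w BR0 finB finR b1 b2 Bb1 Bb2; exact: potential_matches_eq.
Qed.
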